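(* Consider the protocol $P_{RL}$ with parameter $N$ on a directed ring of size $n$ with $2\le n\le N$. The set $\mathcal{C}_{NI}$ of configurations (defined in the context) is closed: no configuration outside $\mathcal{C}_{NI}$ is reachable from a configuration in $\mathcal{C}_{NI}$.
   Context: Model. A population is a directed ring of $n\ge 2$ anonymous agents $u_0,\dots,u_{n-1}$ (indices modulo $n$) with arcs $e_i=(u_i,u_{i+1})$. A configuration $C$ assigns a state to each agent; $C\to C'$ means that $C'$ is obtained from $C$ by one interaction on some arc $e_i$, in which initiator $u_i$ and responder $u_{i+1}$ update their states by the transition function and all other agents keep their states. A configuration is reachable from $C$ if it is obtained from $C$ by finitely many such steps. Protocol $P_{RL}$ (parameter $N$). Each agent has variables $\mathit{leader}\in\{0,1\}$, $\mathit{bullet}\in\{0,1,2\}$, $\mathit{shield}\in\{0,1\}$, $\mathit{signal}\in\{0,1\}$, $\mathit{dist}\in\{0,\dots,N\}$. In an interaction with initiator $l$ and responder $r$ the following are executed in order: 1. If $l.\mathit{leader}=1$ then $l.\mathit{dist}\gets 0$. 2. If $r.\mathit{leader}=1$ then $r.\mathit{dist}\gets 0$; else if $r.\mathit{bullet}=0$ then $r.\mathit{dist}\gets\min(l.\mathit{dist}+1,N)$. 3. If $r.\mathit{dist}=N$ then $r.\mathit{leader}\gets1$, $r.\mathit{bullet}\gets2$, $r.\mathit{shield}\gets1$, $r.\mathit{signal}\gets0$, $r.\mathit{dist}\gets0$. 4. If $l.\mathit{leader}=1$ and $l.\mathit{signal}=1$ then $l.\mathit{bullet}\gets2$, $l.\mathit{shield}\gets1$,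 $l.\mathit{signal}\gets0$. 5. If $r.\mathit{leader}=1$ and $r.\mathit{signal}=1$ then $r.\mathit{bullet}\gets1$, $r.\mathit{shield}\gets0$, $r.\mathit{signal}\gets0$. 6. If $l.\mathit{bullet}>0$ and $r.\mathit{leader}=1$: set $r.\mathit{leader}\gets0$ if ($l.\mathit{bullet}=2$ and $r.\mathit{shield}=0$); then $l.\mathit{bullet}\gets0$. Else, if $l.\mathit{bullet}>0$ and $r.\mathit{leader}=0$: if $r.\mathit{bullet}=0$ then $r.\mathit{bullet}\gets l.\mathit{bullet}$; then $l.\mathit{bullet}\gets0$ and $r.\mathit{signal}\gets0$. 7. $l.\mathit{signal}\gets\max(l.\mathit{signal},r.\mathit{signal},r.\mathit{leader})$. An agent is a leader if $\mathit{leader}=1$ and a follower otherwise. Definitions (in a configuration with at least one leader). $\mathrm{dist}_L(i)=\min\{j\ge0: u_{i-j}.\mathit{leader}=1\}$ and $\mathrm{dist}_R(i)=\min\{j\ge0: u_{i+j}.\mathit{leader}=1\}$. $\mathrm{peaceful}(i)$ holds iff $u_{i-\mathrm{dist}_L(i)}.\mathit{shield}=1$ and $u_{i-j}.\mathit{signal}=0$ for all $0\le j\le\mathrm{dist}_L(i)$. $\mathrm{modest}(i)$ holds iff $\mathrm{peaceful}(i)$ holds and $u_{i-j}.\mathit{dist}\le\mathrm{dist}_L(i-j)$ for all $0\le j\le\mathrm{dist}_L(i)$. $\mathrm{secure}(i)$ holds iff $u_i.\mathit{dist}=0$ when $u_i.\mathit{leader}=1$, and $u_i.\mathit{dist}\le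 N-\mathrm{dist}_R(i)$ when $u_i.\mathit{leader}=0$. $\mathcal{C}_{PB}$ is the set of configurations with at least one leader in which every $u_j$ with $u_j.\mathit{bullet}=2$ satisfies $\mathrm{peaceful}(j)$. $\mathcal{C}_{NI}$ is the set of configurations in $\mathcal{C}_{PB}$ in which every agent $u_i$ satisfies $\mathrm{secure}(i)$ and every $u_j$ with $u_j.\mathit{bullet}=2$ satisfies $\mathrm{modest}(j)$. *)

From Stdlib Require Import Relation_Operators.
From mathcomp Require Import all_boot.
Set Implicit Arguments. Unset Strict Implicit. Unset Printing Implicit Defensive.

Record AState (N : nat) := MkSt {
  leader : bool;
  bullet : 'I_3;
  shield : bool;
  signal : bool;
  dist   : 'I_N.+1
}.

Section Protocol.
Variable N : nat.

Definition set_leader (s : AState N) b := @MkSt N b (bullet s) (shield s) (signal s) (dist s).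
Definition set_bullet (s : AState N) b := @MkSt N (leader s) b (shield s) (signal s) (dist s).
Definition set_shield (s : AState N) b := @MkSt N (leader s) (bullet s) b (signal s) (dist s).
Definition set_signal (s : AState N) b := @MkSt N (leader s) (bullet s) (shield s) b (dist s).
Definition set_dist (s : AState N) d := @MkSt N (leader s) (bullet s) (shield s) (signal s) d.

Definition b0 : 'I_3 := @Ordinal 3 0 isT.
Definition b1 : 'I_3 := @Ordinal 3 1 isT.
Definition b2 : 'I_3 := @Ordinal 3 2 isT.
Definition d0 : 'I_N.+1 := ord0.

(* The transition function: (initiator, responder) -> (initiator', responder'),
   executing steps 1..7 in order. *)
Definition delta (l r : AState N) : AState N * AState N :=
  let l := if leader l then set_dist l d0 else l in
  let r := if leader r then set_dist r d0
           else if bullet r == b0 then set_dist r (inord (minn (dist l).+1 N))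
           else r in
  let r := if nat_of_ord (dist r) == N then @MkSt N true b2 true false d0 else r in
  let l := if leader l && signal l
           then set_signal (set_shield (set_bullet l b2) true) false else l in
  let r := if leader r && signal r
           then set_signal (set_shield (set_bullet r b1) false) false else r in
  let (l, r) :=
    if (0 < bullet l) && leader r then
      (set_bullet l b0,
       if (bullet l == b2) && ~~ shield r then set_leader r false else r)
    else if (0 < bullet l) && ~~ leader r then
      (set_bullet l b0,
       set_signal (if bullet r == b0 then set_bullet r (bullet l) else r) false)
    else (l, r) in
  (set_signal l [|| signal l, signal r | leader r], r).

End Protocol.

(* Configurations of a directed ring of n agents u_0..u_{n-1};
   arc e_i = (u_i, u_{i+1 mod n}); ordS is successor mod n. *)
Definition config (n N : nat) := 'I_n -> AState N.

Section Ring.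
Variables n N : nat.
Implicit Types (C : config n N) (i : 'I_n).

Definition step C C' : Prop :=
  exists i : 'I_n,
    forall j : 'I_n,
      C' j = if j == i then (delta (C i) (C (ordS i))).1
             else if j == ordS i then (delta (C i) (C (ordS i))).2
             else C j.

Definition reachable : config n N -> config n N -> Prop := @clos_refl_trans (config n N) step.

Definition back (j : nat) i : 'I_n := iter j (@ord_pred n) i.
Definition fwd (j : nat) i : 'I_n := iter j (@ordS n) i.

Definition has_leader C : Prop := exists i, leader (C i).

(* dist_L(i) = min {j >= 0 : u_{i-j} is a leader}; dist_R similarly.
   (Only meaningful when a leader exists, in which case the min is < n.) *)
Definition distL C i : nat := find (fun j => leader (C (back j i))) (iota 0 n).
Definition distR C i : nat := find (fun j => leader (C (fwd j i))) (iota 0 n).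

Definition peaceful C i : Prop :=
  shield (C (back (distL C i) i)) /\
  forall j, j <= distL C i -> signal (C (back j i)) = false.

Definition modest C i : Prop :=
  peaceful C i /\
  forall j, j <= distL C i -> (dist (C (back j i)) <= distL C (back j i))%N.

Definition secure C i : Prop :=
  if leader (C i) then nat_of_ord (dist (C i)) = 0
  else (dist (C i) <= N - distR C i)%N.

Definition C_PB C : Prop :=
  has_leader C /\ forall j, nat_of_ord (bullet (C j)) = 2 -> peaceful C j.

Definition C_NI C : Prop :=
  C_PB C /\ (forall i, secure C i) /\
  (forall j, nat_of_ord (bullet (C j)) = 2 -> modest C j).

End Ring.

From Stdlib Require Import Relation_Operators.
From mathcomp Require Import all_boot zify.
Set Implicit Arguments. Unset Strict Implicit. Unset Printing Implicit Defensive.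

(* It suffices to show that one interaction, initiator [l] = u_i and responder
   [r] = u_(i+1), preserves C_NI.  No leader is ever created: by security,
   the dist of a follower [r], and the dist that step 2 hands to it, are at
   most N - dist_R(r) < N.  So either [r] keeps its leader flag or [r] is a
   leader that gets killed.

   If the flag is kept, all leader positions, hence dist_L and dist_R, are
   unchanged, and modesty is re-checked agent by agent along the path from each
   bullet 2 back to its leader; a bullet 2 newly handed to [r] extends the path
   of the bullet 2 of [l], or starts at [l] if [l] is a leader that fires.

   If [r] is killed, the shot came from a modest bullet 2 (or from [l] itself
   as a signalled leader), and [r] was unshielded or signalling.  Then [r]
   ends no modest path, so every bullet 2 keeps its path.  The agents whose
   dist_R grows are exactly those on the killer's path, where dist <= dist_L
   and dist_L + dist_R <= n <= N keep them secure. *)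

Section RingIndex.
Variable n : nat.
Implicit Types (p : pred nat) (i k : 'I_n).

Lemma before_find_iota p j : j < find p (iota 0 n) -> ~~ p j.
Proof.
move=> Hj; have Hjn : j < n.
  by apply: leq_trans Hj _; rewrite -[X in _ <= X](size_iota 0 n) find_size.
by have := before_find 0 Hj; rewrite nth_iota // add0n => ->.
Qed.

Lemma find_iota_le p j : j < n -> p j -> find p (iota 0 n) <= j.
Proof. by move=> Hj Hp; rewrite leqNgt; apply/negP => /before_find_iota; rewrite Hp. Qed.

Lemma find_iota_lt p j : j < n -> p j ->
  find p (iota 0 n) < n /\ p (find p (iota 0 n)).
Proof.
move=> Hj Hp; have Hhas : has p (iota 0 n) by apply/hasP; exists j; rewrite ?mem_iota.
have Hlt : find p (iota 0 n) < n by rewrite -[X in _ < X](size_iota 0 n) -has_find.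
by split => //; have := nth_find 0 Hhas; rewrite nth_iota.
Qed.

Lemma find_iotaE p d : d < n -> p d -> (forall j, j < d -> ~~ p j) ->
  find p (iota 0 n) = d.
Proof.
move=> Hd Hp Hmin; have [_ Hf] := find_iota_lt Hd Hp.
apply/eqP; rewrite eqn_leq (find_iota_le Hd Hp) leqNgt; apply/negP => /Hmin.
by rewrite Hf.
Qed.

Lemma ordS_neq i : 1 < n -> ordS i != i.
Proof.
move=> Hn; rewrite -val_eqE /=; have := ltn_ord i.
case: (ltngtP i.+1 n) => [Hlt|//|Heq] _; first by rewrite modn_small //; lia.
by rewrite Heq modnn; lia.
Qed.

Lemma val_fwd j i : val (fwd j i) = (i + j) %% n.
Proof.
elim: j => [|j IH] /=; first by rewrite addn0 modn_small.
rewrite -/(fwd j i) IH -addn1 modnDml; congr (_ %% _); lia.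
Qed.

Lemma fwdSr j i : fwd j.+1 i = fwd j (ordS i).
Proof. by rewrite /fwd iterSr. Qed.

Lemma backSr j i : back j.+1 i = back j (ord_pred i).
Proof. by rewrite /back iterSr. Qed.

Lemma backS j i : back j.+1 i = ord_pred (back j i).
Proof. by []. Qed.

Lemma back_fwd j i : back j (fwd j i) = i.
Proof. by elim: j i => [|j IH] i //; rewrite backSr /fwd iterS ordSK IH. Qed.

Lemma fwd_back j i : fwd j (back j i) = i.
Proof. by elim: j i => [|j IH] i //; rewrite fwdSr backS ord_predK IH. Qed.

Lemma fwdD a b i : fwd (a + b) i = fwd a (fwd b i).
Proof. by rewrite /fwd iterD. Qed.

Lemma backD a b i : back (a + b) i = back a (back b i).
Proof. by rewrite /back iterD. Qed.

Lemma fwd_n i : fwd n i = i.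
Proof. by apply: val_inj; rewrite val_fwd modnDr modn_small. Qed.

Lemma back_n i : back n i = i.
Proof. by rewrite -{1}(fwd_n i) back_fwd. Qed.

Lemma fwd_onto i k : exists2 j, j < n & fwd j i = k.
Proof.
have Hi := ltn_ord i; exists ((k + n - i) %% n); first by rewrite ltn_mod; lia.
apply: val_inj; rewrite val_fwd modnDmr.
have -> : i + (k + n - i) = k + n by lia.
by rewrite modnDr modn_small.
Qed.

Lemma back_onto i k : exists2 j, j < n & back j i = k.
Proof. by have [j Hj <-] := fwd_onto k i; exists j; rewrite ?back_fwd. Qed.

Lemma backS_eq j k i : back j.+1 k = i -> back j k = ordS i.
Proof. by rewrite backS => <-; rewrite ord_predK. Qed.

End RingIndex.

Section Transition.
Variable N : nat.
Implicit Types l r : AState N.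

Definition rule1 l := if leader l then set_dist l (d0 N) else l.
Definition rule2 l r :=
  if leader r then set_dist r (d0 N)
  else if bullet r == b0 then set_dist r (inord (minn (dist l).+1 N))
  else r.
Definition rule3 r :=
  if nat_of_ord (dist r) == N then @MkSt N true b2 true false (d0 N) else r.
Definition rule4 l :=
  if leader l && signal l then set_signal (set_shield (set_bullet l b2) true) false else l.
Definition rule5 r :=
  if leader r && signal r then set_signal (set_shield (set_bullet r b1) false) false else r.
Definition rule6 l r :=
  if (0 < bullet l) && leader r then
    (set_bullet l b0, if (bullet l == b2) && ~~ shield r then set_leader r false else r)
  else if (0 < bullet l) && ~~ leader r then
    (set_bullet l b0, set_signal (if bullet r == b0 then set_bullet r (bullet l) else r) false)
  else (l, r).
Definition rule7 (p : AState N * AState N) :=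
  let (l, r) := p in (set_signal l [|| signal l, signal r | leader r], r).

Lemma deltaE l r :
  delta l r = rule7 (rule6 (rule4 (rule1 l)) (rule5 (rule3 (rule2 (rule1 l) r)))).
Proof. by []. Qed.

Lemma rule1E l : [/\ leader (rule1 l) = leader l, bullet (rule1 l) = bullet l,
  shield (rule1 l) = shield l, signal (rule1 l) = signal l &
  nat_of_ord (dist (rule1 l)) = if leader l then 0 else nat_of_ord (dist l)].
Proof. by case: l => [[] b s g d]. Qed.

Lemma rule2E l r : [/\ leader (rule2 l r) = leader r, bullet (rule2 l r) = bullet r,
  shield (rule2 l r) = shield r, signal (rule2 l r) = signal r &
  nat_of_ord (dist (rule2 l r)) = if leader r then 0
    else if nat_of_ord (bullet r) == 0 then minn (dist l).+1 N else nat_of_ord (dist r)].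
Proof.
case: r => [[] b s g d] //; rewrite /rule2 /=.
have -> : (b == b0) = (nat_of_ord b == 0) by [].
by case: (_ == 0); split => //=; rewrite inordK // ltnS geq_minr.
Qed.

Lemma rule3_id r : nat_of_ord (dist r) != N -> rule3 r = r.
Proof. by rewrite /rule3 => /negbTE ->. Qed.

Lemma rule4E l : [/\ leader (rule4 l) = leader l,
  nat_of_ord (bullet (rule4 l)) = if leader l && signal l then 2 else nat_of_ord (bullet l),
  shield (rule4 l) = shield l || (leader l && signal l),
  signal (rule4 l) = signal l && ~~ leader l &
  dist (rule4 l) = dist l].
Proof. by case: l => [[] b s [] d]; rewrite /rule4 /= ?orbT ?orbF. Qed.

Lemma rule5E r : [/\ leader (rule5 r) = leader r,
  nat_of_ord (bullet (rule5 r)) = if leader r && signal r then 1 else nat_of_ord (bullet r),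
  shield (rule5 r) = shield r && ~~ (leader r && signal r),
  signal (rule5 r) = signal r && ~~ leader r &
  dist (rule5 r) = dist r].
Proof. by case: r => [[] b s [] d]; rewrite /rule5 /= ?andbT ?andbF. Qed.

Lemma rule6E1 l r : (rule6 l r).1 = if 0 < bullet l then set_bullet l b0 else l.
Proof. by rewrite /rule6; case: (0 < bullet l); case: (leader r). Qed.

Lemma rule6E2 l r : (rule6 l r).2 = if 0 < bullet l then
  (if leader r then
     (if (nat_of_ord (bullet l) == 2) && ~~ shield r then set_leader r false else r)
   else set_signal (if nat_of_ord (bullet r) == 0 then set_bullet r (bullet l) else r) false)
  else r.
Proof. by rewrite /rule6; case: (0 < bullet l); case: (leader r). Qed.

Lemma rule7E p : (rule7 p).1 = set_signal p.1 [|| signal p.1, signal p.2 | leader p.2]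
  /\ (rule7 p).2 = p.2.
Proof. by case: p. Qed.

(* Step 3 fires, i.e. the responder becomes a new leader. *)
Definition spawns l r := nat_of_ord (dist (rule2 (rule1 l) r)) == N.

(* The initiator shoots in step 6: a bullet it carries, or the bullet 2 that
   step 4 loads into a signalled leader. *)
Definition fires l := (0 < bullet l) || leader l && signal l.
Definition fires_live l := (nat_of_ord (bullet l) == 2) || leader l && signal l.

Ltac rewrite_fields E :=
  let a := fresh in let b := fresh in let c := fresh in let d := fresh in let e := fresh in
  case: E => a b c d e; rewrite ?a ?b ?c ?d ?e; clear a b c d e.

Ltac transition_cases l r :=
  rewrite /fires /fires_live deltaE; move=> /rule3_id ->;
  rewrite ?(rule7E _).1 ?(rule7E _).2 ?rule6E1 ?rule6E2 /=;
  repeat (case: ifP => /=);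
  rewrite_fields (rule4E (rule1 l)); rewrite_fields (rule5E (rule2 (rule1 l) r));
  rewrite_fields (rule2E (rule1 l) r); rewrite_fields (rule1E l);
  case: (leader r) => //=; case: (leader l) => //=; case: (signal l) => //=;
  case: (signal r) => //=; case: (shield r) => //=; case: (shield l) => //=;
  case: (bullet l) => [[|[|[|?]]] ?] //=; case: (bullet r) => [[|[|[|?]]] ?] //=.

Lemma leader_delta1 l r : leader (delta l r).1 = leader l.
Proof.
rewrite deltaE (rule7E _).1 rule6E1.
by case: ifP; case: (rule4E (rule1 l)); case: (rule1E l) => ->.
Qed.

Lemma bullet_delta1 l r : nat_of_ord (bullet (delta l r).1) = 0.
Proof.
by rewrite deltaE (rule7E _).1 rule6E1; case: ifP => //=; rewrite lt0n => /negbFE/eqP.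
Qed.

Lemma dist_delta1 l r :
  nat_of_ord (dist (delta l r).1) = if leader l then 0 else nat_of_ord (dist l).
Proof.
rewrite deltaE (rule7E _).1 rule6E1; case: (rule4E (rule1 l)) => _ _ _ _ E4.
by case: (rule1E l) => _ _ _ _ E1; case: ifP => _ /=; rewrite E4 E1.
Qed.

Lemma leader_delta2 l r : ~~ spawns l r -> leader (delta l r).2 -> leader r.
Proof. transition_cases l r. Qed.

Lemma signal_delta2 l r : ~~ spawns l r -> signal (delta l r).2 -> signal r.
Proof. transition_cases l r. Qed.

Lemma dist_delta2_leader l r : ~~ spawns l r -> leader r ->
  nat_of_ord (dist (delta l r).2) = 0.
Proof. transition_cases l r. Qed.

Lemma dist_delta2_relay l r : ~~ spawns l r -> ~~ leader r -> nat_of_ord (bullet r) = 0 ->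
  nat_of_ord (dist (delta l r).2) = minn (if leader l then 0 else nat_of_ord (dist l)).+1 N.
Proof. transition_cases l r. Qed.

Lemma dist_delta2_loaded l r : ~~ spawns l r -> ~~ leader r -> nat_of_ord (bullet r) != 0 ->
  nat_of_ord (dist (delta l r).2) = dist r.
Proof. transition_cases l r. Qed.

Lemma shielded_leader_delta2 l r : ~~ spawns l r -> leader r -> ~~ signal r -> shield r ->
  leader (delta l r).2 && shield (delta l r).2.
Proof. transition_cases l r. Qed.

Lemma signal_delta1_false l r : ~~ spawns l r -> (signal l ==> leader l) ->
  ~~ leader (delta l r).2 -> (~~ leader r ==> ~~ signal r || fires l) ->
  signal (delta l r).1 = false.
Proof. transition_cases l r. Qed.

Lemma shield_delta1 l r : ~~ spawns l r -> leader l -> shield l || signal l ->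
  shield (delta l r).1.
Proof. transition_cases l r. Qed.

Lemma bullet2_delta2 l r : ~~ spawns l r -> nat_of_ord (bullet (delta l r).2) = 2 ->
  nat_of_ord (bullet r) = 2 \/ [/\ ~~ leader r, nat_of_ord (bullet r) = 0 & fires_live l].
Proof. transition_cases l r; by [left | right]. Qed.

Lemma killed_leader_delta2 l r : ~~ spawns l r -> leader r -> ~~ leader (delta l r).2 ->
  fires_live l && (~~ shield r || signal r).
Proof. transition_cases l r. Qed.

Lemma signal_delta2_false l r : ~~ spawns l r -> ~~ leader r -> fires l ->
  signal (delta l r).2 = false.
Proof. transition_cases l r. Qed.

Lemma no_spawn l r : 1 < N -> (~~ leader r -> dist r < N) ->
  (~~ leader r -> ~~ leader l -> nat_of_ord (bullet r) = 0 -> (dist l).+1 < N) ->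
  ~~ spawns l r.
Proof.
move=> HN Hr Hl; rewrite /spawns; case: (rule2E (rule1 l) r) => _ _ _ _ ->.
case: (rule1E l) => _ _ _ _ ->; case: (boolP (leader r)) => [_|Hr']; first lia.
case: ifP => [/eqP Hb|_]; last by have := Hr Hr'; lia.
by case: (boolP (leader l)) => [_|Hl']; [lia | have := Hl Hr' Hl' Hb; lia].
Qed.

End Transition.

Section Distances.
Variables n N : nat.
Implicit Types (C : config n N) (i x : 'I_n).

Lemma leader_at_distL C i : has_leader C ->
  distL C i < n /\ leader (C (back (distL C i) i)).
Proof.
move=> [k Hk]; have [j Hj Ek] := back_onto i k.
by apply: (@find_iota_lt n _ j) => //; rewrite Ek.
Qed.

Lemma leader_at_distR C i : has_leader C ->
  distR C i < n /\ leader (C (fwd (distR C i) i)).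
Proof.
move=> [k Hk]; have [j Hj Ek] := fwd_onto i k.
by apply: (@find_iota_lt n _ j) => //; rewrite Ek.
Qed.

Lemma before_distL C i j : j < distL C i -> ~~ leader (C (back j i)).
Proof. exact: (@before_find_iota n (fun j => leader (C (back j i)))). Qed.

Lemma before_distR C i j : j < distR C i -> ~~ leader (C (fwd j i)).
Proof. exact: (@before_find_iota n (fun j => leader (C (fwd j i)))). Qed.

Lemma distL_le C i j : j < n -> leader (C (back j i)) -> distL C i <= j.
Proof. exact: (@find_iota_le n (fun j => leader (C (back j i)))). Qed.

Lemma distR_le C i j : j < n -> leader (C (fwd j i)) -> distR C i <= j.
Proof. exact: (@find_iota_le n (fun j => leader (C (fwd j i)))). Qed.

Lemma distL_eq C i d : d < n -> leader (C (back d i)) ->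
  (forall j, j < d -> ~~ leader (C (back j i))) -> distL C i = d.
Proof. exact: (@find_iotaE n (fun j => leader (C (back j i)))). Qed.

Lemma distR_eq C i d : d < n -> leader (C (fwd d i)) ->
  (forall j, j < d -> ~~ leader (C (fwd j i))) -> distR C i = d.
Proof. exact: (@find_iotaE n (fun j => leader (C (fwd j i)))). Qed.

Lemma distL0 C i : leader (C i) -> distL C i = 0.
Proof. by move=> Hi; apply: distL_eq => //; exact: leq_trans (ltn0Sn _) (ltn_ord i). Qed.

Lemma distR_gt0 C i : has_leader C -> ~~ leader (C i) -> 0 < distR C i.
Proof.
move=> HL Hi; have [_] := leader_at_distR i HL.
by case: (distR C i) => // H; rewrite H in Hi.
Qed.

Lemma distL_back C i j : has_leader C -> j <= distL C i ->
  distL C (back j i) = distL C i - j.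
Proof.
move=> HL Hj; have [Hd Hl] := leader_at_distL i HL.
apply: distL_eq; [lia | by rewrite -backD subnK |].
by move=> j' Hj'; rewrite -backD; apply: before_distL; lia.
Qed.

Lemma distR_ordS C x : has_leader C -> ~~ leader (C x) ->
  distR C x = (distR C (ordS x)).+1.
Proof.
move=> HL Hx; have [Hd Hl] := leader_at_distR (ordS x) HL.
have Hne : distR C (ordS x) != n.-1.
  apply/eqP => E; rewrite E -fwdSr prednK ?fwd_n in Hl.
    by rewrite Hl in Hx.
  exact: leq_trans (ltn0Sn _) (ltn_ord x).
apply: distR_eq; [lia | by rewrite fwdSr |].
by case=> [|j] Hj //; rewrite fwdSr; apply: before_distR.
Qed.

Lemma distL_ord_pred C x : has_leader C -> ~~ leader (C x) ->
  distL C x = (distL C (ord_pred x)).+1.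
Proof.
move=> HL Hx; have [Hd Hl] := leader_at_distL (ord_pred x) HL.
have Hne : distL C (ord_pred x) != n.-1.
  apply/eqP => E; rewrite E -backSr prednK ?back_n in Hl.
    by rewrite Hl in Hx.
  exact: leq_trans (ltn0Sn _) (ltn_ord x).
apply: distL_eq; [lia | by rewrite backSr |].
by case=> [|j] Hj //; rewrite backSr; apply: before_distL.
Qed.

Lemma distLR_le C x : has_leader C -> ~~ leader (C x) -> distL C x + distR C x <= n.
Proof.
move=> HL Hx; have [Hd Hl] := leader_at_distL x HL.
set d := distL C x in Hd Hl *.
have Hpos : 0 < d by case: (posnP d) Hl => [-> /= Hl0|//]; rewrite Hl0 in Hx.
have Ed : fwd (n - d) x = back d x.
  by rewrite -{1}(fwd_back d x) -fwdD subnK ?fwd_n //; lia.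
have := @distR_le C x (n - d); rewrite Ed => /(_ _ Hl); lia.
Qed.

Lemma eq_distL C C' x : has_leader C ->
  (forall j, j <= distL C x -> leader (C' (back j x)) = leader (C (back j x))) ->
  distL C' x = distL C x.
Proof.
move=> HL Hag; have [Hd Hl] := leader_at_distL x HL.
apply: distL_eq => //; first by rewrite Hag.
by move=> j Hj; rewrite Hag; [apply: before_distL | lia].
Qed.

Lemma eq_distR C C' x : has_leader C ->
  (forall j, j <= distR C x -> leader (C' (fwd j x)) = leader (C (fwd j x))) ->
  distR C' x = distR C x.
Proof.
move=> HL Hag; have [Hd Hl] := leader_at_distR x HL.
apply: distR_eq => //; first by rewrite Hag.
by move=> j Hj; rewrite Hag; [apply: before_distR | lia].
Qed.

Definition modest_site C x (at_leader : bool) : Prop :=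
  [/\ signal (C x) = false, dist (C x) <= distL C x & (at_leader -> shield (C x))].

Lemma modestE C k : modest C k <->
  (forall j, j <= distL C k -> modest_site C (back j k) (j == distL C k)).
Proof.
split=> [[[Hsh Hsig] Hd] j Hj|H]; first by split=> [||/eqP ->]; [exact: Hsig | exact: Hd |].
split; [split|] => [|j /H []//|j /H []//].
by have [_ _] := H _ (leqnn _); apply; rewrite eqxx.
Qed.

End Distances.

Section Interaction.
Variables n N : nat.
Hypothesis Hn : 1 < n.
Hypothesis HnN : n <= N.
Variables (C C' : config n N) (i : 'I_n).
Hypothesis HC' : forall j, C' j = if j == i then (delta (C i) (C (ordS i))).1
  else if j == ordS i then (delta (C i) (C (ordS i))).2 else C j.
Hypothesis HNI : C_NI C.

Local Notation l := (C i).
Local Notation r := (C (ordS i)).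
Local Notation l' := (delta (C i) (C (ordS i))).1.
Local Notation r' := (delta (C i) (C (ordS i))).2.
Local Notation ri := (ordS i).

Lemma C'_initiator : C' i = l'.
Proof. by rewrite HC' eqxx. Qed.

Lemma C'_responder : C' ri = r'.
Proof. by rewrite HC' (negbTE (ordS_neq i Hn)) eqxx. Qed.

Lemma C'_other x : x != i -> x != ri -> C' x = C x.
Proof. by move=> /negbTE Hi /negbTE Hr; rewrite HC' Hi Hr. Qed.

Lemma has_leader_C : has_leader C.
Proof. by case: HNI => [[]]. Qed.

Lemma modest_C x : nat_of_ord (bullet (C x)) = 2 -> modest C x.
Proof. by case: HNI => _ [_]; apply. Qed.

Lemma secure_C x : secure C x.
Proof. by case: HNI => _ []. Qed.

Lemma secure_follower x : ~~ leader (C x) -> dist (C x) <= N - distR C x.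
Proof. by have := secure_C x; rewrite /secure => + /negbTE Hx; rewrite Hx. Qed.

Lemma secure_leader x : leader (C x) -> nat_of_ord (dist (C x)) = 0.
Proof. by have := secure_C x; rewrite /secure => + Hx; rewrite Hx. Qed.

Lemma no_spawn_lr : ~~ spawns l r.
Proof.
apply: no_spawn; first lia.
- move=> Hr; have := secure_follower Hr; have := distR_gt0 has_leader_C Hr; lia.
- move=> Hr Hl _; have := secure_follower Hl.
  rewrite (distR_ordS has_leader_C Hl); have := distR_gt0 has_leader_C Hr; lia.
Qed.

Lemma leader_C' x : x != ri -> leader (C' x) = leader (C x).
Proof.
move=> Hx; case: (eqVneq x i) => [->|Hi]; first by rewrite C'_initiator leader_delta1.
by rewrite C'_other.
Qed.

Lemma distL_responder : distL C ri = if leader r then 0 else (distL C i).+1.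
Proof.
case: ifP => Hr; first exact: distL0.
by rewrite (distL_ord_pred has_leader_C) ?Hr // ordSK.
Qed.

Lemma modest_on_unchanged_path k : modest C k ->
  (forall j, j <= distL C k -> C' (back j k) = C (back j k)) -> modest C' k.
Proof.
move=> Hm Hag; have HL := has_leader_C.
have Hd : distL C' k = distL C k by apply: eq_distL => // j Hj; rewrite Hag.
apply/modestE; rewrite Hd => j Hj.
have Hdj : distL C' (back j k) = distL C (back j k).
  apply: eq_distL => // j' Hj'; rewrite (distL_back HL Hj) in Hj'.
  by rewrite -backD Hag //; lia.
by have := (modestE C k).1 Hm j Hj; rewrite /modest_site Hag // Hdj.
Qed.

Lemma leader_at_path_end k j : j == distL C k -> leader (C (back j k)).
Proof. by move=> /eqP ->; have [_] := leader_at_distL k has_leader_C. Qed.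

Section ResponderKeepsFlag.
Hypothesis Hkeep : leader r' = leader r.

Lemma leader_keep x : leader (C' x) = leader (C x).
Proof.
by case: (eqVneq x ri) => [->|]; [rewrite C'_responder Hkeep | exact: leader_C'].
Qed.

Lemma has_leader_keep : has_leader C'.
Proof. by have [x Hx] := has_leader_C; exists x; rewrite leader_keep. Qed.

Lemma distL_keep x : distL C' x = distL C x.
Proof. by apply: eq_distL => [|j _]; [exact: has_leader_C | exact: leader_keep]. Qed.

Lemma distR_keep x : distR C' x = distR C x.
Proof. by apply: eq_distR => [|j _]; [exact: has_leader_C | exact: leader_keep]. Qed.

Lemma modest_site_initiator (e : bool) : (signal l ==> leader l) -> ~~ leader r ->
  (~~ leader r ==> ~~ signal r || fires l) ->
  (~~ leader l -> dist l <= distL C i) -> (e -> leader l && (shield l || signal l)) ->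
  modest_site C' i e.
Proof.
move=> Hsig Hr Hfire Hd He; rewrite /modest_site C'_initiator distL_keep; split.
- by apply: signal_delta1_false; rewrite ?Hkeep //; exact: no_spawn_lr.
- by rewrite dist_delta1; case: ifP => // /negbT.
- by move=> /He /andP [Hl Hs]; apply: shield_delta1 Hl Hs; exact: no_spawn_lr.
Qed.

Lemma modest_site_responder (e : bool) :
  signal r = false \/ ~~ leader r /\ fires l ->
  (~~ leader r -> nat_of_ord (bullet r) = 0 -> ~~ leader l -> dist l <= distL C i) ->
  (~~ leader r -> nat_of_ord (bullet r) != 0 -> dist r <= distL C ri) ->
  (e -> [/\ leader r, signal r = false & shield r]) ->
  modest_site C' ri e.
Proof.
have Hns := no_spawn_lr.
move=> Hsig Hrelay Hloaded He; rewrite /modest_site C'_responder distL_keep; split.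
- case: Hsig => [Hs|[Hr Hf]]; last exact: signal_delta2_false.
  by apply: contraFF Hs; exact: signal_delta2.
- case: (boolP (leader r)) => [Hr|Hr]; first by rewrite dist_delta2_leader.
  rewrite distL_responder (negbTE Hr).
  case: (eqVneq (nat_of_ord (bullet r)) 0) => Hb.
    rewrite dist_delta2_relay //; case: ifP => Hl; first lia.
    by have := Hrelay Hr Hb (negbT Hl); lia.
  by rewrite dist_delta2_loaded //; have := Hloaded Hr Hb; rewrite distL_responder (negbTE Hr).
- by move=> /He [Hr /negbT Hs Hsh]; have /andP[] := shielded_leader_delta2 Hns Hr Hs Hsh.
Qed.

Lemma modest_keep_old k : k != i -> modest C k -> modest C' k.
Proof.
move=> Hki Hm; apply/modestE; rewrite distL_keep => j Hj.
have Hsite := (modestE C k).1 Hm j Hj.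
case: (eqVneq (back j k) i) => [Exi|Hxi].
  case: j Hj Hsite Exi => [|j] Hj Hsite Exi; first by move: Hki; rewrite -Exi eqxx.
  have Exr := backS_eq Exi.
  have Hr : ~~ leader r by rewrite -Exr; apply: before_distL.
  have [Hsr _ _] := (modestE C k).1 Hm j (ltnW Hj); rewrite Exr in Hsr.
  move: Hsite; rewrite Exi => -[Hs Hd He]; apply: modest_site_initiator => //.
  - by rewrite Hs.
  - by rewrite Hr /= Hsr.
  - by move=> HE; rewrite He // orTb andbT -Exi; exact: leader_at_path_end HE.
case: (eqVneq (back j k) ri) => [Exr|Hxr]; last by rewrite /modest_site C'_other // distL_keep.
move: Hsite; rewrite Exr => -[Hs Hd He]; apply: modest_site_responder => //; first by left.
- move=> Hr _ _; have Hjd : j < distL C k.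
    rewrite ltn_neqAle Hj andbT; apply: contraNneq Hr => Ej.
    by rewrite -Exr; apply: leader_at_path_end; rewrite Ej.
  by have [] := (modestE C k).1 Hm j.+1 Hjd; rewrite backS Exr ordSK.
- by move=> HE; split; [rewrite -Exr; exact: leader_at_path_end HE | | exact: He].
Qed.

Lemma modest_keep_new : nat_of_ord (bullet r) = 0 -> ~~ leader r -> fires_live l ->
  modest C' ri.
Proof.
move=> Hb Hr Hlive.
have Hcase : modest C i \/ leader l /\ signal l.
  by case/orP: Hlive => [/eqP/modest_C Hm|/andP Hls]; [left | right].
have Hfire : fires l.
  by case/orP: Hlive => [/eqP Hb2|Hls]; rewrite /fires ?Hb2 ?Hls ?orbT.
have Hdl : ~~ leader l -> dist l <= distL C i.
  move=> Hl; case: Hcase => [Hm|[Hl' _]]; last by rewrite Hl' in Hl.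
  by have [] := (modestE C i).1 Hm 0 (leq0n _).
apply/modestE; rewrite distL_keep distL_responder (negbTE Hr) => -[|j] Hj.
  by apply: modest_site_responder; [right; split | move=> _ _ | rewrite Hb |].
rewrite backSr ordSK eqSS; rewrite ltnS in Hj.
case: (eqVneq (back j i) i) => [Exi|Hxi].
  rewrite Exi; apply: modest_site_initiator => //.
  - case: Hcase => [Hm|[-> _]]; last by rewrite implybT.
    by have [->] := (modestE C i).1 Hm 0 (leq0n _).
  - by rewrite Hr /= Hfire orbT.
  - move=> HE; case: Hcase => [Hm|[-> ->]]; last by rewrite orbT.
    have [_ _ Hsh] := (modestE C i).1 Hm j Hj; rewrite Exi in Hsh.
    by rewrite Hsh // andbT -{1}Exi; exact: leader_at_path_end.
case: (eqVneq (back j i) ri) => [Exr|Hxr].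
  rewrite Exr; apply: modest_site_responder.
  - by right; split.
  - by move=> _ _.
  - by rewrite Hb.
  by move=> HE; have := leader_at_path_end HE; rewrite Exr (negbTE Hr).
case: Hcase => [Hm|[Hl _]].
  by have := (modestE C i).1 Hm j Hj; rewrite /modest_site C'_other // distL_keep.
by move: Hj; rewrite (distL0 Hl) leqn0 => /eqP Ej; rewrite Ej eqxx in Hxi.
Qed.

Lemma secure_keep x : secure C' x.
Proof.
have HL := has_leader_C; rewrite /secure leader_keep distR_keep.
case: (eqVneq x i) => [->|Hxi].
  by rewrite C'_initiator dist_delta1; case: (boolP (leader l)) => // /secure_follower.
case: (eqVneq x ri) => [->|Hxr]; last by rewrite C'_other //; exact: secure_C.
rewrite C'_responder; case: (boolP (leader r)) => Hr.
  by rewrite dist_delta2_leader //; exact: no_spawn_lr.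
case: (eqVneq (nat_of_ord (bullet r)) 0) => Hb.
  rewrite dist_delta2_relay //; last exact: no_spawn_lr.
  have [Hd _] := leader_at_distR ri HL; case: ifP => Hl; first lia.
  by have := secure_follower (negbT Hl); rewrite (distR_ordS HL (negbT Hl)); lia.
by rewrite dist_delta2_loaded //; [exact: secure_follower | exact: no_spawn_lr].
Qed.

Lemma modest_keep k : nat_of_ord (bullet (C' k)) = 2 -> modest C' k.
Proof.
case: (eqVneq k i) => [->|Hki]; first by rewrite C'_initiator bullet_delta1.
case: (eqVneq k ri) => [->|Hkr].
  rewrite C'_responder => /(bullet2_delta2 no_spawn_lr) [Hb2|[Hr Hb0 Hlive]].
    by apply: modest_keep_old; [exact: ordS_neq | exact: modest_C].
  exact: modest_keep_new.
by rewrite C'_other // => /modest_C; exact: modest_keep_old.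
Qed.

Lemma C_NI_keep : C_NI C'.
Proof.
split; [split|split]; [exact: has_leader_keep | | exact: secure_keep | exact: modest_keep].
by move=> k /modest_keep [].
Qed.

End ResponderKeepsFlag.

Section ResponderKilled.
Hypothesis Hr : leader r.
Hypothesis Hkilled : ~~ leader r'.

Lemma kill_shot : fires_live l && (~~ shield r || signal r).
Proof. exact: killed_leader_delta2 no_spawn_lr Hr Hkilled. Qed.

Lemma not_modest_site_responder (e : bool) : modest_site C ri e -> ~~ e.
Proof.
move=> [Hs _ Hsh]; apply/negP => /Hsh Hsh'.
by move: kill_shot; rewrite Hsh' Hs andbF.
Qed.

Lemma modest_path_avoids_responder k j : modest C k -> j <= distL C k -> back j k != ri.
Proof.
move=> Hm Hj; apply/eqP => Ej.
have Hend : j = distL C k.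
  have [Hd _] := leader_at_distL k has_leader_C.
  by apply/eqP; rewrite eqn_leq Hj distL_le ?Ej //; lia.
have := (modestE C k).1 Hm j Hj; rewrite Ej => /not_modest_site_responder.
by rewrite Hend eqxx.
Qed.

Lemma modest_or_firing_initiator : modest C i \/ leader l /\ signal l.
Proof.
by case/andP: kill_shot => /orP[/eqP/modest_C Hm|/andP Hls] _; [left | right].
Qed.

Lemma initiator_path_avoids_responder j : j <= distL C i -> back j i != ri.
Proof.
move=> Hj; case: modest_or_firing_initiator => [Hm|[Hl _]].
  exact: modest_path_avoids_responder.
by move: Hj; rewrite (distL0 Hl) leqn0 => /eqP ->; rewrite eq_sym ordS_neq.
Qed.

Lemma has_leader_kill : has_leader C'.
Proof.
have [_ Hl] := leader_at_distL i has_leader_C.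
by exists (back (distL C i) i); rewrite leader_C' // initiator_path_avoids_responder.
Qed.

Lemma distL_kill j : j <= distL C i -> distL C' (back j i) = distL C (back j i).
Proof.
move=> Hj; apply: eq_distL => [|j' Hj']; first exact: has_leader_C.
rewrite (distL_back has_leader_C Hj) in Hj'.
by rewrite leader_C' // -backD; apply: initiator_path_avoids_responder; lia.
Qed.

Lemma secure_on_initiator_path j : j <= distL C i -> ~~ leader (C (back j i)) ->
  dist (C (back j i)) <= N - distR C' (back j i).
Proof.
move=> Hj Hx; case: modest_or_firing_initiator => [Hm|[Hl _]]; last first.
  by move: Hj Hx; rewrite (distL0 Hl) leqn0 => /eqP ->; rewrite Hl.
have [_ Hd _] := (modestE C i).1 Hm j Hj; rewrite -(distL_kill Hj) in Hd.
have Hx' : ~~ leader (C' (back j i)) by rewrite leader_C' // initiator_path_avoids_responder.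
by have := distLR_le has_leader_kill Hx'; lia.
Qed.

Lemma distR_kill x : fwd (distR C x) x != ri -> distR C' x = distR C x.
Proof.
move=> Hx; apply: eq_distR => [|j Hj]; first exact: has_leader_C.
apply: leader_C'; case: (ltngtP j (distR C x)) => [Hlt|Hgt|-> //].
  by apply: contraNneq (before_distR Hlt) => ->.
by move: Hj; rewrite leqNgt Hgt.
Qed.

Lemma on_initiator_path_of_victim x : ~~ leader (C x) -> fwd (distR C x) x = ri ->
  exists2 j, j < distL C i & x = back j i.
Proof.
move=> Hx; move: (distR C x) (distR_gt0 has_leader_C Hx) (@before_distR _ _ C x).
case=> [//|m] _ Hbefore Em.
have Ex : x = back m i by rewrite -(back_fwd m.+1 x) Em backSr ordSK.
have Hnot j : j <= m -> ~~ leader (C (back j i)).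
  move=> Hj; have -> : back j i = fwd (m - j) x.
    by rewrite Ex -[X in fwd _ (back X i)](subnK Hj) backD fwd_back.
  by apply: Hbefore; lia.
exists m => //; rewrite ltnNge; apply/negP => /Hnot.
by have [_ ->] := leader_at_distL i has_leader_C.
Qed.

Lemma secure_kill x : secure C' x.
Proof.
rewrite /secure; case: (eqVneq x ri) => [->|Hxr].
  by rewrite C'_responder (negbTE Hkilled) dist_delta2_leader //; exact: no_spawn_lr.
rewrite leader_C' //; case: (eqVneq x i) => [->|Hxi].
  rewrite C'_initiator dist_delta1; case: (boolP (leader l)) => // Hl.
  exact: (@secure_on_initiator_path 0).
rewrite C'_other //; case: (boolP (leader (C x))) => [|Hx]; first exact: secure_leader.
case: (eqVneq (fwd (distR C x) x) ri) => [Ev|Hv]; last first.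
  by rewrite distR_kill //; exact: secure_follower.
have [j Hj Ex] := on_initiator_path_of_victim Hx Ev.
by rewrite Ex; apply: secure_on_initiator_path; [exact: ltnW | rewrite -Ex].
Qed.

Lemma modest_kill k : nat_of_ord (bullet (C' k)) = 2 -> modest C' k.
Proof.
case: (eqVneq k i) => [->|Hki]; first by rewrite C'_initiator bullet_delta1.
case: (eqVneq k ri) => [->|Hkr].
  rewrite C'_responder => /(bullet2_delta2 no_spawn_lr) [Hb2|[Hr' _ _]]; last first.
    by rewrite Hr in Hr'.
  have := (modestE C ri).1 (modest_C Hb2) 0 (leq0n _).
  by move/not_modest_site_responder; rewrite (distL0 Hr).
rewrite C'_other // => /modest_C Hm; apply: modest_on_unchanged_path => // j Hj.
apply: C'_other; last exact: modest_path_avoids_responder.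
case: j Hj => [|j] Hj; first by [].
apply: contraTneq (modest_path_avoids_responder Hm (ltnW Hj)) => /backS_eq ->.
by rewrite eqxx.
Qed.

Lemma C_NI_kill : C_NI C'.
Proof.
split; [split|split]; [exact: has_leader_kill | | exact: secure_kill | exact: modest_kill].
by move=> k /modest_kill [].
Qed.

End ResponderKilled.

Lemma C_NI_step : C_NI C'.
Proof.
case: (boolP (leader r)) => Hr.
  by case: (boolP (leader r')) => Hr'; [apply: C_NI_keep; rewrite Hr Hr' | exact: C_NI_kill].
apply: C_NI_keep; rewrite (negbTE Hr); apply: negbTE; apply: contra Hr.
exact: leader_delta2 no_spawn_lr.
Qed.

End Interaction.

Unset Implicit Arguments.

Theorem lemma6 (N n : nat) (Hn : 2 <= n) (HnN : n <= N) (C C' : config n N) :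
  C_NI C -> reachable C C' -> C_NI C'.
Proof.
move=> HC HCC'; elim: HCC' HC => [x y [k Hk] | x | x y z _ IH1 _ IH2] HC.
- exact: (C_NI_step Hn HnN Hk HC).
- exact: HC.
- exact: IH2 (IH1 HC).
Qed.
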